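(* Let $\mathcal{H}$ be an infinite dimensional complex Hilbert space and let $\phi:\mathcal{B}(\mathcal{H})\to\mathcal{B}(\mathcal{H})$ be a bijective map preserving the Douglas solution in both directions. Then for every $B\in\mathcal{B}(\mathcal{H})$: $\operatorname{ran}B=\mathcal{H}$ if and only if $\operatorname{ran}\phi(B)=\mathcal{H}$.
   Context: $\mathcal{B}(\mathcal{H})$ denotes the algebra of all bounded linear operators on $\mathcal{H}$. For $A,B\in\mathcal{B}(\mathcal{H})$ with $\operatorname{ran}A\subseteq\operatorname{ran}B$, the Douglas solution of $A=BX$ is the unique $D\in\mathcal{B}(\mathcal{H})$ with $BD=A$ and $\operatorname{ran}D\subseteq(\ker B)^\perp$. A map $\phi:\mathcal{B}(\mathcal{H})\to\mathcal{B}(\mathcal{H})$ preserves the Douglas solution in both directions if for all $A,B,X\in\mathcal{B}(\mathcal{H})$: $X$ is the Douglas solution of $A=BX$ if and only if $\phi(X)$ is the Douglas solution of $\phi(A)=\phi(B)Y$. *)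

From HB Require Import structures.
From mathcomp Require Import all_boot all_order all_algebra.
From mathcomp Require Import reals.
From mathcomp Require Import complex.
Set Implicit Arguments. Unset Strict Implicit. Unset Printing Implicit Defensive.
Import Order.TTheory GRing.Theory Num.Theory.
Local Open Scope ring_scope.
Local Open Scope complex_scope.

Definition is_inner_product (R : realType) (H : lmodType R[i])
  (ip : H -> H -> R[i]) : Prop :=
  [/\ forall (a : R[i]) (x y z : H), ip (a *: x + y) z = a * ip x z + ip y z,
      forall x y : H, ip y x = (ip x y)^*,
      forall x : H, 0 <= ip x x
    & forall x : H, ip x x = 0 -> x = 0].

Definition nrm2 (R : realType) (H : lmodType R[i]) (ip : H -> H -> R[i])
  (x : H) : R[i] := ip x x.

Definition ip_complete (R : realType) (H : lmodType R[i])
  (ip : H -> H -> R[i]) : Prop :=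
  forall u : nat -> H,
    (forall e : R, 0 < e -> exists N : nat, forall m n : nat,
        (N <= m)%N -> (N <= n)%N -> nrm2 ip (u m - u n) < e%:C) ->
    exists l : H, forall e : R, 0 < e -> exists N : nat, forall n : nat,
        (N <= n)%N -> nrm2 ip (u n - l) < e%:C.

Definition is_Hilbert (R : realType) (H : lmodType R[i])
  (ip : H -> H -> R[i]) : Prop :=
  is_inner_product ip /\ ip_complete ip.

Definition infinite_dim (R : realType) (H : lmodType R[i]) : Prop :=
  forall n : nat, exists v : 'I_n -> H,
    forall c : 'I_n -> R[i], \sum_(i < n) c i *: v i = 0 -> forall i, c i = 0.

Definition is_bounded_op (R : realType) (H : lmodType R[i])
  (ip : H -> H -> R[i]) (f : H -> H) : Prop :=
  linear f /\
  exists M : R, forall x : H, nrm2 ip (f x) <= M%:C * nrm2 ip x.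

Record bop (R : realType) (H : lmodType R[i]) (ip : H -> H -> R[i]) := Bop {
  bop_fun :> H -> H;
  bop_bounded : is_bounded_op ip bop_fun }.

(* X is the Douglas solution of A = B X :
   B X = A and ran X is contained in (ker B)^perp. *)
Definition douglas_solution (R : realType) (H : lmodType R[i])
  (ip : H -> H -> R[i]) (A B X : bop ip) : Prop :=
  (forall x : H, B (X x) = A x) /\
  (forall x y : H, B y = 0 -> ip (X x) y = 0).

Definition full_range (R : realType) (H : lmodType R[i])
  (ip : H -> H -> R[i]) (T : bop ip) : Prop :=
  forall y : H, exists x : H, T x = y.

From HB Require Import structures.
From mathcomp Require Import all_boot all_order all_algebra.
From mathcomp Require Import boolp classical_sets reals complex.
From mathcomp Require Import ring lra.
Set Implicit Arguments. Unset Strict Implicit. Unset Printing Implicit Defensive.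
Import Order.TTheory GRing.Theory Num.Theory.
Local Open Scope ring_scope.
Local Open Scope complex_scope.

(* The identity operator I is a bounded operator, and every A is the Douglas
   solution of A = I X (the condition ran X ⊆ (ker I)^⊥ = H is vacuous).  Applied
   to A = phi^-1 I this gives that phi I acts as the identity.  Next, ran B = H
   holds iff the equation I = B X has a Douglas solution: one direction is
   trivial, and the other is the existence of a bounded right inverse of a
   surjective B with range in (ker B)^⊥.  Since phi preserves Douglas solutions
   in both directions and fixes I, the theorem follows.
   The analytic core is the construction of that right inverse: send y to its
   unique preimage orthogonal to ker B.  It exists by the projection theorem
   (nearest points in the closed subspace ker B, via the parallelogram law) and
   it is bounded by the open mapping theorem, proved through the Baire category
   theorem and the classical successive approximation argument.  All of this is
   developed below from the bare axioms of a complete inner product space. *)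

Notation cRe := complex.Re.
Notation cIm := complex.Im.

Lemma dependent_choice (T : Type) (P : nat -> T -> T -> Prop) (x0 : T) :
  (forall k x, exists y, P k x y) ->
  exists u : nat -> T, u 0%N = x0 /\ forall k, P k (u k) (u k.+1).
Proof.
move=> hP; have [f hf] :=
  choice (P := fun (kx : nat * T) y => P kx.1 kx.2 y) (fun kx => hP kx.1 kx.2).
pose u := fix u (k : nat) : T := if k is k'.+1 then f (k', u k') else x0.
by exists u; split=> // k; exact: hf (k, u k).
Qed.

Section RealFacts.
Context {R : realType}.

Definition recip (n : nat) : R := (n.+1%:R)^-1.

Lemma recip_gt0 n : 0 < recip n.
Proof. by rewrite invr_gt0 ltr0Sn. Qed.

Lemma recip_le1 n : recip n <= 1.
Proof. by rewrite invf_le1 ?ltr0Sn // ler1n. Qed.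

Lemma recip_le (m n : nat) : (n <= m)%N -> recip m <= recip n.
Proof. by move=> h; rewrite lef_pV2 ?posrE ?ltr0Sn // ler_nat ltnS. Qed.

Lemma recip_small (e : R) : 0 < e -> exists N : nat, recip N < e.
Proof.
move=> e0; exists (Num.bound e^-1).
have ei : 0 < e^-1 by rewrite invr_gt0.
have h : e^-1 < (Num.bound e^-1).+1%:R.
  by apply: lt_trans (archi_boundP (ltW ei)) _; rewrite ltr_nat.
by rewrite /recip -[X in _ < X]invrK ltf_pV2 ?posrE ?ltr0Sn ?invr_gt0.
Qed.

Lemma geometric_small (c e : R) : 0 <= c -> 0 < e -> exists N : nat, c * 2^-1 ^+ N < e.
Proof.
move=> c0 e0; have c1 : 0 < c + 1 by lra.
have [N hN] := recip_small (divr_gt0 e0 c1); exists N.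
have hg : (2^-1 : R) ^+ N <= recip N.
  rewrite exprVn -natrX lef_pV2 ?posrE ?ltr0n ?expn_gt0 // ler_nat.
  exact: ltn_expl.
have hg0 : 0 <= (2^-1 : R) ^+ N by rewrite exprn_ge0 // invr_ge0 ler0n.
have : (c + 1) * recip N < e by rewrite mulrC -ltr_pdivlMr.
nra.
Qed.

Lemma quadratic_nonneg (a qw : R) :
  0 < qw -> (forall t : R, 0 <= t ^+ 2 * qw - 2 * t * a) -> a = 0.
Proof.
move=> q0 h; have := h (a / qw).
have -> : (a / qw) ^+ 2 * qw - 2 * (a / qw) * a = - (a ^+ 2 / qw).
  by field; rewrite gt_eqF.
rewrite oppr_ge0 pmulr_lle0 ?invr_gt0 // => h2.
by apply/eqP; rewrite -sqrf_eq0 eq_le h2 sqr_ge0.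
Qed.

Lemma excess_small (D e : R) : 0 <= D -> 0 < e ->
  exists N : nat, forall n, (N <= n)%N -> (D + recip n) ^+ 2 - D ^+ 2 < e.
Proof.
move=> D0 e0; have c0 : 0 < 2 * D + 1 by lra.
have [N hN] := recip_small (divr_gt0 e0 c0).
exists N => n hn; have := recip_le hn; have := recip_gt0 n; have := recip_le1 n.
have : recip N * (2 * D + 1) < e by rewrite -ltr_pdivlMr.
nra.
Qed.

Lemma cplx_ge0_real (z : R[i]) : 0 <= z -> z = (cRe z)%:C.
Proof. by rewrite lecE => /andP [/eqP h _]; case: z h => a b /= ->. Qed.

Lemma cplx_eq0 (z : R[i]) : cRe z = 0 -> cIm z = 0 -> z = 0.
Proof. by case: z => a b /= -> ->. Qed.

Lemma Re_realM (r : R) (z : R[i]) : cRe (r%:C * z) = r * cRe z.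
Proof. by case: z => a b /=; ring. Qed.

End RealFacts.

Section Hilbert.
Variables (R : realType) (H : lmodType R[i]) (ip : H -> H -> R[i]).
Hypotheses (hip : is_inner_product ip) (hcomp : ip_complete ip).

Lemma ipDZ a x y z : ip (a *: x + y) z = a * ip x z + ip y z.
Proof. by case: hip. Qed.
Lemma ipC x y : ip y x = (ip x y)^*.
Proof. by case: hip. Qed.
Lemma ipxx0 x : ip x x = 0 -> x = 0.
Proof. by case: hip => _ _ _; apply. Qed.

Lemma ip0l z : ip 0 z = 0.
Proof.
have := ipDZ 1 0 0 z; rewrite scale1r addr0 mul1r => h.
by apply/(addrI (ip 0 z)); rewrite addr0 -h.
Qed.
Lemma ipDl x y z : ip (x + y) z = ip x z + ip y z.
Proof. by have := ipDZ 1 x y z; rewrite scale1r mul1r. Qed.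
Lemma ipZl a x z : ip (a *: x) z = a * ip x z.
Proof. by have := ipDZ a x 0 z; rewrite !addr0 ip0l addr0. Qed.
Lemma ipNl x z : ip (- x) z = - ip x z.
Proof. by rewrite -scaleN1r ipZl mulN1r. Qed.
Lemma ipBl x y z : ip (x - y) z = ip x z - ip y z.
Proof. by rewrite ipDl ipNl. Qed.
Lemma ip0r z : ip z 0 = 0.
Proof. by rewrite ipC ip0l conjc0. Qed.
Lemma ipDr z x y : ip z (x + y) = ip z x + ip z y.
Proof. by rewrite (ipC (x + y)) (ipC x) (ipC y) ipDl raddfD. Qed.
Lemma ipZr z a x : ip z (a *: x) = a^* * ip z x.
Proof. by rewrite (ipC x) (ipC (a *: x)) ipZl rmorphM. Qed.
Lemma ipNr z x : ip z (- x) = - ip z x.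
Proof. by rewrite (ipC x) (ipC (- x)) ipNl raddfN. Qed.

Definition q x := cRe (ip x x).

Lemma ipxx x : ip x x = (q x)%:C.
Proof. by apply: cplx_ge0_real; case: hip. Qed.
Lemma q_ge0 x : 0 <= q x.
Proof. by case: hip => _ _ /(_ x); rewrite lecE => /andP[]. Qed.
Lemma q_eq0 x : q x = 0 -> x = 0.
Proof. by move=> h; apply: ipxx0; rewrite ipxx h. Qed.
Lemma q0 : q 0 = 0.
Proof. by rewrite /q ip0l. Qed.

Lemma ReipZr (r : R) x y : cRe (ip x (r%:C *: y)) = r * cRe (ip x y).
Proof. by rewrite ipZr; case: (ip x y) => a b /=; ring. Qed.
Lemma Reipi x y : cRe (ip x ('i *: y)) = cIm (ip x y).
Proof. by rewrite ipZr; case: (ip x y) => a b /=; ring. Qed.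

Lemma qD x y : q (x + y) = q x + q y + 2 * cRe (ip x y).
Proof.
rewrite /q ipDl !ipDr (ipC x y); case: (ip x x) (ip x y) (ip y y) => [a b] [c d] [e f] /=.
ring.
Qed.
Lemma qN x : q (- x) = q x.
Proof. by rewrite /q ipNl ipNr opprK. Qed.
Lemma qZ (r : R) x : q (r%:C *: x) = r ^+ 2 * q x.
Proof. by rewrite /q ipZl Re_realM ReipZr mulrA expr2. Qed.
Lemma qB x y : q (x - y) = q x + q y - 2 * cRe (ip x y).
Proof. by rewrite qD qN ipNr; case: (ip x y) => a b /=; ring. Qed.

Lemma q_orth x y : ip x y = 0 -> q (x + y) = q x + q y.
Proof. by move=> h; rewrite qD h /=; ring. Qed.

Lemma parallelogram x y : q (x - y) + q (x + y) = 2 * q x + 2 * q y.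
Proof. by rewrite qB qD; ring. Qed.

Lemma cauchy_schwarz x y : cRe (ip x y) ^+ 2 <= q x * q y.
Proof.
have [->|yn0] := eqVneq y 0; first by rewrite ip0r q0 /= mulr0 expr0n.
have qy : 0 < q y by rewrite lt_def q_ge0 andbT; apply/eqP => /q_eq0; apply/eqP.
set a := cRe (ip x y).
have h := q_ge0 (x + (- a / q y)%:C *: y).
rewrite qD qZ ReipZr -/a in h.
have e : q y * (q x + (- a / q y) ^+ 2 * q y + 2 * ((- a / q y) * a))
         = q y * q x - a ^+ 2 by field; rewrite gt_eqF.
have := mulr_ge0 (ltW qy) h; rewrite e; lra.
Qed.

Definition nm x := Num.sqrt (q x).

Lemma nm_ge0 x : 0 <= nm x. Proof. exact: sqrtr_ge0. Qed.
Lemma nm_sq x : nm x ^+ 2 = q x. Proof. exact: sqr_sqrtr (q_ge0 x). Qed.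
Lemma nm0 : nm 0 = 0. Proof. by rewrite /nm q0 sqrtr0. Qed.
Lemma nm_eq0 x : nm x = 0 -> x = 0.
Proof. by move=> h; apply: q_eq0; rewrite -nm_sq h expr0n. Qed.
Lemma nm_gt0 x : x != 0 -> 0 < nm x.
Proof.
by move=> x0; rewrite lt_def nm_ge0 andbT; apply/eqP => /nm_eq0 h; rewrite h eqxx in x0.
Qed.
Lemma nmN x : nm (- x) = nm x. Proof. by rewrite /nm qN. Qed.
Lemma nmB x y : nm (x - y) = nm (y - x). Proof. by rewrite -nmN opprB. Qed.
Lemma nmZ (r : R) x : nm (r%:C *: x) = `|r| * nm x.
Proof. by rewrite /nm qZ sqrtrM ?sqr_ge0 // sqrtr_sqr. Qed.
Lemma nm_le x y : (nm x <= nm y) = (q x <= q y).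
Proof. by rewrite /nm ler_sqrt ?q_ge0. Qed.
Lemma nm_lt_sq x e : 0 < e -> (nm x < e) = (q x < e ^+ 2).
Proof.
by move=> e0; have := ltr_sqrt (q x) (exprn_gt0 2 e0); rewrite sqrtr_sqr gtr0_norm.
Qed.
Lemma q_le_sq x (d : R) : nm x <= d -> q x <= d ^+ 2.
Proof. by rewrite -nm_sq => h; have := nm_ge0 x; nra. Qed.
Lemma sq_le_q x (d : R) : 0 <= d -> d <= nm x -> d ^+ 2 <= q x.
Proof. by rewrite -nm_sq; nra. Qed.

Lemma nmD x y : nm (x + y) <= nm x + nm y.
Proof.
have hcs : `|cRe (ip x y)| <= nm x * nm y.
  by rewrite -sqrtr_sqr /nm -sqrtrM ?q_ge0 // ler_sqrt ?mulr_ge0 ?q_ge0 ?cauchy_schwarz.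
have := ler_norm (cRe (ip x y)); have := nm_sq x; have := nm_sq y.
have := nm_ge0 x; have := nm_ge0 y; have := nm_ge0 (x + y); have := nm_sq (x + y).
rewrite qD; nra.
Qed.
Lemma nm_subD x y : nm (x - y) <= nm x + nm y.
Proof. by rewrite -(nmN y) nmD. Qed.
Lemma nm_tri x y z : nm (x - z) <= nm (x - y) + nm (y - z).
Proof. by have := nmD (x - y) (y - z); rewrite addrA subrK. Qed.

Lemma nm_small (v : H) : (forall e : R, 0 < e -> nm v <= e) -> v = 0.
Proof.
move=> h; apply: nm_eq0; apply/le_anti; rewrite nm_ge0 andbT.
by apply/ler_addgt0Pr => e e0; rewrite add0r; apply: h.
Qed.

Lemma complete_nm (u : nat -> H) :
  (forall e : R, 0 < e -> exists N : nat, forall m n : nat,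
        (N <= m)%N -> (N <= n)%N -> nm (u m - u n) < e) ->
  exists l : H, forall e : R, 0 < e -> exists N : nat, forall n : nat,
        (N <= n)%N -> nm (u n - l) < e.
Proof.
have nrm2E x (e : R) : 0 < e -> (nrm2 ip x < (e ^+ 2)%:C) = (nm x < e).
  by move=> e0; rewrite /nrm2 ipxx ltcR nm_lt_sq.
move=> hc; have [l hl] : exists l : H, forall e : R, 0 < e -> exists N : nat,
    forall n : nat, (N <= n)%N -> nrm2 ip (u n - l) < e%:C.
  apply: hcomp => e e0; have s0 : 0 < Num.sqrt e by rewrite sqrtr_gt0.
  have [N hN] := hc _ s0; exists N => m n hm hn.
  by rewrite -[e]sqr_sqrtr ?ltW // nrm2E // hN.
exists l => e e0; have [N hN] := hl (e ^+ 2) (exprn_gt0 2 e0).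
by exists N => n hn; rewrite -nrm2E // hN.
Qed.

Lemma telescoping_limit (u : nat -> H) (a : nat -> R) :
  (forall k, nm (u k.+1 - u k) <= a k - a k.+1) ->
  (forall k, 0 <= a k) ->
  (forall e, 0 < e -> exists N, a N < e) ->
  exists l, forall k, nm (l - u k) <= a k.
Proof.
move=> hstep hpos hsmall.
have hmk m k : nm (u (m + k)%N - u k) <= a k - a (m + k)%N.
  elim: m => [|m IH]; first by rewrite add0n subrr nm0 subrr.
  rewrite addSn; apply: le_trans (nm_tri _ (u (m + k)%N) _) _.
  have := hstep (m + k)%N; lra.
have hge m k : (k <= m)%N -> nm (u m - u k) <= a k.
  move=> hkm; rewrite -(subnK hkm); have := hmk (m - k)%N k.
  have := hpos ((m - k) + k)%N; lra.
have [l hl] : exists l, forall e : R, 0 < e -> exists N : nat, forall n : nat,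
    (N <= n)%N -> nm (u n - l) < e.
  apply: complete_nm => e e0; have [N hN] := hsmall (e / 2) (divr_gt0 e0 (ltr0n _ 2)).
  exists N => m n hm hn; apply: le_lt_trans (nm_tri _ (u N) _) _.
  rewrite (nmB (u N)); have := hge m N hm; have := hge n N hn; lra.
exists l => k; apply/ler_addgt0Pr => e e0; have [N hN] := hl e e0.
have := hN (maxn N k) (leq_maxl _ _); have := hge (maxn N k) k (leq_maxr _ _).
have := nm_tri l (u (maxn N k)) (u k); rewrite (nmB l (u (maxn N k))); lra.
Qed.

Lemma bopL (T : bop ip) a u v : T (a *: u + v) = a *: T u + T v.
Proof. by case: (bop_bounded T) => hl _; apply: hl. Qed.
Lemma bop0 (T : bop ip) : T 0 = 0.
Proof.
have := bopL T 1 0 0; rewrite !scale1r !addr0 => h.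
by apply/(addrI (T 0)); rewrite addr0 -h.
Qed.
Lemma bopD (T : bop ip) u v : T (u + v) = T u + T v.
Proof. by have := bopL T 1 u v; rewrite !scale1r. Qed.
Lemma bopZ (T : bop ip) a u : T (a *: u) = a *: T u.
Proof. by rewrite -(addr0 (a *: u)) bopL bop0 addr0. Qed.
Lemma bopB (T : bop ip) u v : T (u - v) = T u - T v.
Proof. by rewrite bopD -scaleN1r bopZ scaleN1r. Qed.

Lemma bop_bound (T : bop ip) : exists K, 0 <= K /\ forall x, nm (T x) <= K * nm x.
Proof.
case: (bop_bounded T) => _ [M hM].
exists (Num.sqrt `|M|); split=> [|x]; first exact: sqrtr_ge0.
have := hM x; rewrite /nrm2 !ipxx lecE => /andP[_]; rewrite Re_realM /= => h.
rewrite /nm -sqrtrM ?normr_ge0 // ler_sqrt ?mulr_ge0 ?normr_ge0 ?q_ge0 //.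
by apply: le_trans h _; apply: ler_wpM2r; [exact: q_ge0 | exact: ler_norm].
Qed.

Lemma kernel_closed (T : bop ip) (l : H) :
  (forall e, 0 < e -> exists k, T k = 0 /\ nm (k - l) < e) -> T l = 0.
Proof.
move=> hl; have [K [K0 hK]] := bop_bound T.
apply: nm_small => e e0; have K1 : 0 < K + 1 by lra.
have [k [Tk hk]] := hl _ (divr_gt0 e0 K1).
have -> : T l = - T (k - l) by rewrite bopB Tk sub0r opprK.
rewrite nmN; apply: le_trans (hK _) _.
have : nm (k - l) * (K + 1) < e by rewrite -ltr_pdivlMr.
by have := nm_ge0 (k - l); nra.
Qed.

Section Projection.
Variable S : H -> Prop.
Hypotheses (S0 : S 0) (S_lin : forall a u v, S u -> S v -> S (a *: u + v))
  (S_closed : forall l, (forall e, 0 < e -> exists k, S k /\ nm (k - l) < e) -> S l).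

Lemma nearest_orth (v l : H) : S l -> (forall k, S k -> nm (v - l) <= nm (v - k)) ->
  forall w, S w -> ip (v - l) w = 0.
Proof.
move=> Sl hmin.
have hre w : S w -> cRe (ip (v - l) w) = 0.
  move=> Sw; have [->|w0] := eqVneq w 0; first by rewrite ip0r.
  apply: (@quadratic_nonneg _ _ (q w)); first by rewrite -nm_sq exprn_gt0 ?nm_gt0.
  move=> t; have Sk : S (l + t%:C *: w) by rewrite addrC; apply: S_lin.
  by have := hmin _ Sk; rewrite opprD addrA nm_le (qB (v - l)) qZ ReipZr; lra.
move=> w Sw; apply: cplx_eq0; first exact: hre.
by rewrite -Reipi; apply: hre; rewrite -[_ *: w]addr0; apply: S_lin.
Qed.

Lemma near_minimizers_close (D d1 d2 : R) (v k1 k2 : H) :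
  0 <= D -> (forall k, S k -> D <= nm (v - k)) -> S k1 -> S k2 ->
  nm (v - k1) <= d1 -> nm (v - k2) <= d2 ->
  q (k1 - k2) <= 2 * (d1 ^+ 2 - D ^+ 2) + 2 * (d2 ^+ 2 - D ^+ 2).
Proof.
move=> D0 hD Sk1 Sk2 h1 h2.
pose mid := (2^-1)%:C *: (k2 + k1).
have Smid : S mid.
  by rewrite /mid -[_ *: _]addr0; apply: S_lin => //; rewrite -[k2]scale1r; apply: S_lin.
have e1 : v - k2 - (v - k1) = k1 - k2 by rewrite opprB addrC addrA subrK.
have e2 : v - k2 + (v - k1) = 2%:C *: (v - mid).
  rewrite scalerBr scalerA -rmorphM mulfV ?pnatr_eq0 // rmorph1 scale1r.
  by rewrite rmorph_nat scaler_nat mulr2n opprD addrACA.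
have := parallelogram (v - k2) (v - k1); rewrite e1 e2 qZ.
have := q_le_sq h1; have := q_le_sq h2; have := sq_le_q D0 (hD _ Smid); lra.
Qed.

(* The distance from v to S is attained: a minimizing sequence is Cauchy by the
   parallelogram estimate, and its limit stays in the closed set S. *)
Lemma nearest_point_exists (v : H) :
  exists l, S l /\ forall k, S k -> nm (v - l) <= nm (v - k).
Proof.
pose dists : set R := fun t => exists k, S k /\ t = nm (v - k).
have lb0 : lbound dists 0 by move=> t [k [_ ->]]; exact: nm_ge0.
have hinf : has_inf dists by split; [exists (nm v), 0; rewrite subr0 | exists 0].
set D := inf dists.
have D0 : 0 <= D by apply: lb_le_inf hinf.1 lb0.
have hD k : S k -> D <= nm (v - k) by move=> Sk; apply: (ge_inf hinf.2); exists k.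
have near n : exists k, S k /\ nm (v - k) < D + recip n.
  by have [_ [k [Sk ->]] hk] := inf_adherent (recip_gt0 n) hinf; exists k.
have [ks hks] := choice near.
have [l hl] : exists l, forall e : R, 0 < e -> exists N : nat, forall n : nat,
    (N <= n)%N -> nm (ks n - l) < e.
  apply: complete_nm => e e0.
  have [N hN] := excess_small D0 (divr_gt0 (exprn_gt0 2 e0) (ltr0n _ 4)).
  exists N => m n hm hn; rewrite nm_lt_sq //.
  have [[Skm hkm] [Skn hkn]] := (hks m, hks n).
  have := near_minimizers_close D0 hD Skm Skn (ltW hkm) (ltW hkn).
  have := hN m hm; have := hN n hn; lra.
have Sl : S l.
  by apply: S_closed => e /hl [N hN]; exists (ks N); split; [case: (hks N) | apply: hN].
exists l; split=> // k Sk; apply: le_trans (hD _ Sk).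
apply/ler_addgt0Pr => e e0; have e2 : 0 < e / 2 by rewrite divr_gt0.
have [N1 hN1] := hl _ e2; have [N2 hN2] := recip_small e2.
have := hN1 _ (leq_maxl N1 N2); have := recip_le (R := R) (leq_maxr N1 N2).
have := nm_tri v (ks (maxn N1 N2)) l; have := (hks (maxn N1 N2)).2.
by rewrite (nmB (ks _)); lra.
Qed.

End Projection.

Lemma kernel_projection (T : bop ip) (v : H) :
  exists k, T k = 0 /\ forall w, T w = 0 -> ip (v - k) w = 0.
Proof.
have S_lin a u w : T u = 0 -> T w = 0 -> T (a *: u + w) = 0.
  by move=> hu hw; rewrite bopL hu hw scaler0 addr0.
pose S k := T k = 0.
have [k [Sk hk]] := nearest_point_exists (S := S) (bop0 T) S_lin (@kernel_closed T) v.
by exists k; split; [exact: Sk | exact: (nearest_orth (S := S) (bop0 T) S_lin Sk hk)].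
Qed.

Definition closed_set (F : H -> Prop) : Prop :=
  forall y, ~ F y -> exists e, 0 < e /\ forall u, nm (u - y) <= e -> ~ F u.

Lemma baire_step (F : H -> Prop) (n : nat) : closed_set F ->
  (forall z r, 0 < r -> exists y, nm (y - z) < r /\ ~ F y) ->
  forall z r, 0 < r -> exists z' s, [/\ 0 < s, nm (z' - z) + s <= r, s <= recip n
    & forall u, nm (u - z') <= s -> ~ F u].
Proof.
move=> hF hdense z r r0.
have [y [hy Fy]] := hdense z (r / 2) (divr_gt0 r0 (ltr0n _ 2)).
have [e [e0 he]] := hF y Fy.
pose s := Num.min e (Num.min (r / 4) (recip n)).
have s0 : 0 < s by rewrite !lt_min e0 divr_gt0 ?ltr0n ?recip_gt0.
have s_e : s <= e by rewrite ge_min lexx.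
have s_r : s <= r / 4 by rewrite !ge_min lexx orbT.
have s_n : s <= recip n by rewrite !ge_min lexx !orbT.
exists y, s; split=> //; first lra.
by move=> u hu; apply: he; apply: le_trans s_e.
Qed.

Lemma baire (F : nat -> H -> Prop) : (forall n, closed_set (F n)) ->
  (forall y, exists n, F n y) ->
  exists n y0 r, 0 < r /\ forall y, nm (y - y0) < r -> F n y.
Proof.
move=> hF hcover; apply: contrapT => hno.
have hdense n z r : 0 < r -> exists y, nm (y - z) < r /\ ~ F n y.
  move=> r0; apply: contrapT => hn; apply: hno; exists n, z, r; split=> // y hy.
  by apply: contrapT => Fy; apply: hn; exists y.
pose P k (p p' : H * R) := 0 < p.2 -> [/\ 0 < p'.2, nm (p'.1 - p.1) + p'.2 <= p.2,
  p'.2 <= recip k & forall u, nm (u - p'.1) <= p'.2 -> ~ F k u].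
have hP k p : exists p', P k p p'.
  have [r0|r0] := boolP (0 < p.2); last by exists p => /(negP r0).
  by have [z' [s hs]] := baire_step k (hF k) (hdense k) p.1 r0; exists (z', s).
have [u [u0 hu]] := dependent_choice (0, 1) hP.
have pos k : 0 < (u k).2.
  elim: k => [|k IH]; first by rewrite u0 ltr01.
  by case: (hu k IH).
have [l hl] : exists l, forall k, nm (l - (u k).1) <= (u k).2.
  apply: telescoping_limit.
  - by move=> k; case: (hu k (pos k)) => _ h _ _; lra.
  - by move=> k; apply: ltW.
  - move=> e /recip_small [N hN]; exists N.+1.
    by case: (hu N (pos N)) => _ _ h _; apply: le_lt_trans hN.
have [k Fkl] := hcover l.
by case: (hu k (pos k)) => _ _ _ /(_ l (hl k.+1)).
Qed.

Section OpenMapping.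
Variable T : bop ip.
Hypothesis T_onto : forall y, exists x, T x = y.

Definition near_image (c : R) (y : H) : Prop :=
  forall e, 0 < e -> exists x, nm x <= c /\ nm (T x - y) < e.

Lemma near_image_closed c : closed_set (near_image c).
Proof.
move=> y hy.
have [e [e0 he]] : exists e, 0 < e /\ forall x, nm x <= c -> e <= nm (T x - y).
  apply: contrapT => hno; apply: hy => e e0; apply: contrapT => hx; apply: hno.
  exists e; split=> // x hxc; rewrite leNgt; apply/negP => hlt.
  by apply: hx; exists x.
exists (e / 2); split=> [|u hu hnu]; first by rewrite divr_gt0.
have [x [hx hxu]] := hnu _ (divr_gt0 e0 (ltr0n _ 2)).
by have := he x hx; have := nm_tri (T x) u y; lra.
Qed.

Lemma near_image_cover y : exists n : nat, near_image n%:R y.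
Proof.
have [x <-] := T_onto y; exists (Num.bound (nm x)) => e e0.
by exists x; rewrite subrr nm0 e0 ltW // archi_boundP // nm_ge0.
Qed.

Lemma near_image0 c : 0 <= c -> near_image c 0.
Proof. by move=> c0 e e0; exists 0; rewrite nm0 bop0 subr0 nm0. Qed.

Lemma near_image_sub c1 c2 y1 y2 :
  near_image c1 y1 -> near_image c2 y2 -> near_image (c1 + c2) (y1 - y2).
Proof.
move=> h1 h2 e e0; have e2 : 0 < e / 2 by rewrite divr_gt0.
have [x1 [hx1 hT1]] := h1 _ e2; have [x2 [hx2 hT2]] := h2 _ e2.
exists (x1 - x2); split; first by have := nm_subD x1 x2; lra.
have -> : T (x1 - x2) - (y1 - y2) = (T x1 - y1) - (T x2 - y2).
  by rewrite bopB opprD opprK addrACA (opprB (T x2)) (addrC (- T x2)).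
by have := nm_subD (T x1 - y1) (T x2 - y2); lra.
Qed.

Lemma near_image_scale c (t : R) y :
  0 < t -> near_image c y -> near_image (t * c) (t%:C *: y).
Proof.
move=> t0 hy e e0; have [x [hx hTx]] := hy _ (divr_gt0 e0 t0).
exists (t%:C *: x); split; first by rewrite nmZ gtr0_norm // ler_wpM2l // ltW.
by rewrite bopZ -scalerBr nmZ gtr0_norm // mulrC -ltr_pdivlMr.
Qed.

Lemma approximate_preimages : exists C, 0 <= C /\ forall y, near_image (C * nm y) y.
Proof.
have [n [y0 [r [r0 hball]]]] := baire (F := fun n : nat => near_image n%:R)
  (fun n => @near_image_closed n%:R) near_image_cover.
have small y : nm y < r -> near_image (n%:R + n%:R) y.
  move=> hy; rewrite -(addKr y0 y) (addrC (- y0)).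
  by apply: near_image_sub; apply: hball; rewrite ?subrr ?nm0 // (addrC y0) addrK.
exists (2 * (n%:R + n%:R) / r); split=> [|y].
  by rewrite divr_ge0 ?mulr_ge0 ?addr_ge0 // ltW.
have [->|y0'] := eqVneq y 0; first by rewrite nm0 mulr0; apply: near_image0.
have ny := nm_gt0 y0'; pose t := 2 * nm y / r.
have t0 : 0 < t by rewrite divr_gt0 ?mulr_gt0.
have -> : 2 * (n%:R + n%:R) / r * nm y = t * (n%:R + n%:R).
  by rewrite /t; field; rewrite ?gt_eqF.
have -> : y = t%:C *: ((t^-1)%:C *: y).
  by rewrite scalerA -rmorphM mulfV ?gt_eqF // scale1r.
apply: near_image_scale => //; apply: small.
rewrite nmZ gtr0_norm ?invr_gt0 //.
have -> : t^-1 * nm y = r / 2 by rewrite /t; field; rewrite ?gt_eqF.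
lra.
Qed.

(* Successive approximation: the approximate preimages are corrected by a
   geometric series, giving exact preimages with twice the constant. *)
Lemma exact_preimages (C : R) : 0 <= C -> (forall z, near_image (C * nm z) z) ->
  forall y, exists x, T x = y /\ nm x <= 2 * C * nm y.
Proof.
move=> C0 hC y; have [->|y0] := eqVneq y 0.
  by exists 0; rewrite bop0 nm0 mulr0.
have ny := nm_gt0 y0; pose g (k : nat) : R := 2^-1 ^+ k.
have g0 k : 0 < g k by rewrite exprn_gt0 // invr_gt0.
pose P k (x x' : H) := nm (y - T x) <= nm y * g k ->
  nm (x' - x) <= C * nm y * g k /\ nm (y - T x') <= nm y * g k.+1.
have hP k x : exists x', P k x x'.
  have [d [hd hTd]] := hC (y - T x) _ (mulr_gt0 ny (g0 k.+1)).
  exists (x + d) => hx; split.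
    rewrite (addrC x d) addrK; apply: le_trans hd _.
    by rewrite -mulrA; apply: ler_wpM2l.
  by rewrite bopD opprD addrA nmB; apply: ltW.
have [xs [xs0 hxs]] := dependent_choice 0 hP.
have inv k : nm (y - T (xs k)) <= nm y * g k.
  elim: k => [|k IH]; first by rewrite xs0 bop0 subr0 /g expr0 mulr1.
  exact: (hxs k IH).2.
have [K [K0 hK]] := bop_bound T.
have [x hx] : exists x, forall k, nm (x - xs k) <= 2 * C * nm y * g k.
  apply: telescoping_limit.
  - by move=> k; have := (hxs k (inv k)).1; rewrite /g exprSr; lra.
  - by move=> k; rewrite !mulr_ge0 // ltW.
  - by move=> e e0; apply: geometric_small => //; rewrite !mulr_ge0 // ltW.
exists x; split; last by have := hx 0%N; rewrite xs0 subr0 /g expr0 mulr1.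
apply/eqP; rewrite -subr_eq0; apply/eqP; apply: nm_small => e e0.
have c0 : 0 <= (2 * C * K + 1) * nm y by rewrite mulr_ge0 ?nm_ge0 // addr_ge0 ?mulr_ge0.
have [k hk] := geometric_small c0 e0.
have -> : T x - y = T (x - xs k) - (y - T (xs k)) by rewrite bopB opprB addrA subrK.
apply: le_trans (nm_subD _ _) _.
have := hK (x - xs k); have := hx k; have := inv k; have := g0 k; rewrite -/(g k) in hk.
by have := nm_ge0 (x - xs k); nra.
Qed.

Lemma open_mapping : exists C, 0 <= C /\ forall y, exists x, T x = y /\ nm x <= C * nm y.
Proof.
have [C [C0 hC]] := approximate_preimages.
by exists (2 * C); split; [rewrite mulr_ge0 | exact: exact_preimages].
Qed.

Lemma orth_preimage_unique (u1 u2 : H) : T u1 = T u2 ->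
  (forall w, T w = 0 -> ip u1 w = 0) -> (forall w, T w = 0 -> ip u2 w = 0) -> u1 = u2.
Proof.
move=> hT h1 h2; have hd : T (u1 - u2) = 0 by rewrite bopB hT subrr.
by apply/eqP; rewrite -subr_eq0; apply/eqP; apply: ipxx0; rewrite ipBl h1 ?h2 ?subrr.
Qed.

Lemma orth_preimages : exists C, 0 <= C /\ forall y, exists u,
  [/\ T u = y, forall w, T w = 0 -> ip u w = 0 & nm u <= C * nm y].
Proof.
have [C [C0 hC]] := open_mapping; exists C; split=> // y.
have [x [hx hxn]] := hC y; have [k [hk hort]] := kernel_projection T x.
exists (x - k); split=> //; first by rewrite bopB hk subr0.
have pyth : q x = q (x - k) + q k by rewrite -(q_orth (hort k hk)) subrK.
by apply: le_trans hxn; rewrite nm_le pyth; have := q_ge0 k; lra.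
Qed.

Lemma right_inverse : exists X : bop ip,
  forall x, T (X x) = x /\ forall w, T w = 0 -> ip (X x) w = 0.
Proof.
have [C [C0 hC]] := orth_preimages; have [X hX] := choice hC.
have X_lin : linear X.
  move=> a u v; apply: orth_preimage_unique.
  - case: (hX (a *: u + v)) => -> _ _; rewrite bopL.
    by case: (hX u) => -> _ _; case: (hX v) => -> _ _.
  - by case: (hX (a *: u + v)).
  - move=> w hw; rewrite ipDZ; case: (hX u) => _ -> // _; case: (hX v) => _ -> // _.
    by rewrite mulr0 addr0.
have X_bd y : nrm2 ip (X y) <= (C ^+ 2)%:C * nrm2 ip y.
  rewrite /nrm2 !ipxx -rmorphM lecR -!nm_sq; case: (hX y) => _ _ h.
  by have := nm_ge0 (X y); have := nm_ge0 y; nra.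
exists (Bop (conj X_lin (ex_intro _ (C ^+ 2) X_bd))) => x /=.
by case: (hX x).
Qed.

End OpenMapping.

End Hilbert.

Lemma idop_bounded (R : realType) (H : lmodType R[i]) (ip : H -> H -> R[i]) :
  is_bounded_op ip (fun x : H => x).
Proof. by split=> [a u v //|]; exists 1 => x; rewrite mul1r. Qed.

Definition idop (R : realType) (H : lmodType R[i]) (ip : H -> H -> R[i]) : bop ip :=
  Bop (idop_bounded ip).

Section Douglas.
Variables (R : realType) (H : lmodType R[i]) (ip : H -> H -> R[i]).
Hypothesis hip : is_inner_product ip.

(* Every A is the Douglas solution of A = I X, since ker I = 0. *)
Lemma douglas_idop (A : bop ip) : douglas_solution A (idop ip) A.
Proof. by split=> // x y /= ->; rewrite ip0r. Qed.

Lemma preserver_fixes_idop (phi : bop ip -> bop ip) (g : bop ip -> bop ip) :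
  cancel g phi ->
  (forall A B X, douglas_solution A B X <-> douglas_solution (phi A) (phi B) (phi X)) ->
  forall x, phi (idop ip) x = x.
Proof.
move=> gK hpres x; have := (hpres (g (idop ip)) (idop ip) (g (idop ip))).1.
by rewrite gK => /(_ (douglas_idop _)) [->].
Qed.

Lemma full_range_douglas (I B : bop ip) : ip_complete ip -> (forall x, I x = x) ->
  full_range B <-> exists X, douglas_solution I B X.
Proof.
move=> hcomp hI; split=> [hB | [X [hX _]] y].
  have [X hX] := right_inverse hip hcomp hB.
  by exists X; split=> x; rewrite ?hI; case: (hX x).
by exists (X y); rewrite hX hI.
Qed.

End Douglas.

Theorem claim1 (R : realType) (H : lmodType R[i]) (ip : H -> H -> R[i])
  (hH : is_Hilbert ip) (hinf : infinite_dim H)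
  (phi : bop ip -> bop ip) (hbij : bijective phi)
  (hpres : forall A B X : bop ip,
      douglas_solution A B X <-> douglas_solution (phi A) (phi B) (phi X)) :
  forall B : bop ip, full_range B <-> full_range (phi B).
Proof.
move=> B; case: hH => hip hcomp; case: hbij => g gK Kg.
have hI : forall x, phi (idop ip) x = x := preserver_fixes_idop hip Kg hpres.
rewrite (full_range_douglas hip B hcomp (I := idop ip) (fun x => erefl))
        (full_range_douglas hip (phi B) hcomp hI).
split=> [[X hX] | [Y hY]].
  by exists (phi X); exact: (hpres _ _ _).1 hX.
by exists (g Y); apply: (hpres _ _ _).2; rewrite Kg.
Qed.
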